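(* Let $L$ be the $S$-glued sum of an $S$-glued system $(L_x)_{x\in S}$, and let $U\subseteq L$ be a subset having a least element $u$ and a greatest element $v$ (with respect to the order of $L$). Let $A$ be the set of elements $a\in U$ such that there is no $b\in U$ with $u<b<a$ (and $a\ne u$). Assume that every $a\in A$ covers $u$ in $L$ and that $v=\sup_L A$. Then there is $x\in S$ with $U\subseteq L_x$ such that for all $a,b,c\in U$: $\sup_L(a,b)=c$ iff $a+_x b=c$, and $\inf_L(a,b)=c$ iff $a\cdot_x b=c$.
   Context: Let $S$ be a lattice of finite length (every chain in $S$ is finite), with order $\le$, join $\vee$ and meet $\wedge$; $x\prec y$ means that $y$ covers $x$. An \emph{$S$-glued system} is a family $(L_x,\le_x)_{x\in S}$ of lattices of finite length (with join $+_x$, meet $\cdot_x$, least element $0_x$, greatest element $1_x$), whose underlying sets may overlap, such that for all $x,y\in S$: (1) if $x\le y$ and $L_x\cap L_y\ne\emptyset$, then $L_x\cap L_y$ is a filter of $L_x$ and an ideal of $L_y$; (2) in the situation of (1), for all $a,b\in L_x\cap L_y$: $a\le_x b$ iff $a\le_y b$; (3) if $x\prec y$ then $L_x\cap L_y\ne\emptyset$; (4) $L_x\cap L_y\subseteq L_{x\wedge y}\cap L_{x\vee y}$. The \emph{$S$-glued sum} of the system is the set $L=\bigcup_{x\in S}L_x$ equipped with the relation $\le$ defined as the transitive closure of $\bigcup_{x\in S}\le_x$; it is a lattice. *)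

(* S is a mathcomp latticeType; the glued lattices L_x live
   as subsets of a common carrier type T, with their own order relations. *)
From HB Require Import structures.
From mathcomp Require Import all_boot all_order.
From Stdlib Require Relation_Operators List.
Set Implicit Arguments. Unset Strict Implicit. Unset Printing Implicit Defensive.
Import Order.TTheory.
Local Open Scope order_scope.

Section GeneralOrders.
Variable T : Type.

Definition finite_length (P : T -> Prop) (le : T -> T -> Prop) : Prop :=
  forall C : T -> Prop,
    (forall a, C a -> P a) ->
    (forall a b, C a -> C b -> le a b \/ le b a) ->
    exists s : list T, forall a, C a -> List.In a s.

Definition is_lub (P : T -> Prop) (le : T -> T -> Prop) (a b c : T) : Prop :=
  P c /\ le a c /\ le b c /\ forall d, P d -> le a d -> le b d -> le c d.

Definition is_glb (P : T -> Prop) (le : T -> T -> Prop) (a b c : T) : Prop :=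
  P c /\ le c a /\ le c b /\ forall d, P d -> le d a -> le d b -> le d c.

Definition is_sup (P : T -> Prop) (le : T -> T -> Prop) (A : T -> Prop) (c : T)
  : Prop :=
  P c /\ (forall a, A a -> le a c) /\
  (forall d, P d -> (forall a, A a -> le a d) -> le c d).

Definition is_fl_lattice (P : T -> Prop) (le : T -> T -> Prop) : Prop :=
  (forall a b, le a b -> P a /\ P b) /\
  (forall a, P a -> le a a) /\
  (forall a b, le a b -> le b a -> a = b) /\
  (forall a b c, le a b -> le b c -> le a c) /\
  (forall a b, P a -> P b -> exists c, is_lub P le a b c) /\
  (forall a b, P a -> P b -> exists c, is_glb P le a b c) /\
  (exists z, P z /\ forall a, P a -> le z a) /\
  (exists t, P t /\ forall a, P a -> le a t) /\
  finite_length P le.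

Definition is_filter (P : T -> Prop) (le : T -> T -> Prop) (F : T -> Prop)
  : Prop :=
  (exists a, F a) /\ (forall a, F a -> P a) /\
  (forall a b, F a -> P b -> le a b -> F b) /\
  (forall a b c, F a -> F b -> is_glb P le a b c -> F c).

Definition is_ideal (P : T -> Prop) (le : T -> T -> Prop) (I : T -> Prop)
  : Prop :=
  (exists a, I a) /\ (forall a, I a -> P a) /\
  (forall a b, I a -> P b -> le b a -> I b) /\
  (forall a b c, I a -> I b -> is_lub P le a b c -> I c).

End GeneralOrders.

Definition covers {d : Order.disp_t} {S : latticeType d} (x y : S) : Prop :=
  x < y /\ ~ (exists z, x < z /\ z < y).

Definition lattice_finite_length {d : Order.disp_t} (S : latticeType d) : Prop :=
  finite_length (fun _ : S => True) (fun x y => x <= y).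

Definition glued_system {d : Order.disp_t} {S : latticeType d} {T : Type}
  (Lm : S -> T -> Prop) (le : S -> T -> T -> Prop) : Prop :=
  (forall x, is_fl_lattice (Lm x) (le x)) /\
  (forall x y, x <= y -> (exists a, Lm x a /\ Lm y a) ->
     is_filter (Lm x) (le x) (fun a => Lm x a /\ Lm y a) /\
     is_ideal (Lm y) (le y) (fun a => Lm x a /\ Lm y a)) /\
  (forall x y, x <= y -> (exists a, Lm x a /\ Lm y a) ->
     forall a b, Lm x a -> Lm y a -> Lm x b -> Lm y b ->
       (le x a b <-> le y a b)) /\
  (forall x y, covers x y -> exists a, Lm x a /\ Lm y a) /\
  (forall x y a, Lm x a -> Lm y a -> Lm (x `&` y) a /\ Lm (x `|` y) a).

Definition glued_set {d : Order.disp_t} {S : latticeType d} {T : Type}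
  (Lm : S -> T -> Prop) : T -> Prop := fun a => exists x, Lm x a.

Definition glued_le {d : Order.disp_t} {S : latticeType d} {T : Type}
  (le : S -> T -> T -> Prop) : T -> T -> Prop :=
  Relation_Operators.clos_trans T (fun a b => exists x, le x a b).

(* Let x be the greatest index with u in L_x; it exists because S has finite
   length and L_y meets L_z only inside L_(y `|` z).  An atom a of U covers u in
   L, so u <= a is a single step inside some L_y with y <= x, whence a lies in L_x.
   The heart of the matter is that a join a +_x b computed in a component is a
   least upper bound in L: an upper bound e of a is reached from a by a chain of
   steps in components L_q, and the join can be pushed along this chain,
   replacing x by x `|` q at each step.  Hence the largest element of L_x below v
   bounds all atoms, so v lies in L_x; as each L_x is convex in L, U is contained
   in L_x and joins in U agree in L and L_x.  Meets follow by order duality. *)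

From mathcomp Require Import all_boot all_order.
From Stdlib Require Import Classical ClassicalEpsilon Relation_Operators Operators_Properties.
From Stdlib Require Import FunctionalExtensionality PropExtensionality Lia.
From Stdlib Require FinFun List.
Set Implicit Arguments. Unset Strict Implicit. Unset Printing Implicit Defensive.
Import Order.TTheory.
Local Open Scope order_scope.

Lemma list_cover_not_injective (T : Type) (f : nat -> T) (s : list T) :
  (forall n, List.In (f n) s) -> ~ injective f.
Proof.
move=> cover f_inj.
pose l := List.map f (List.seq 0 (List.length s).+1).
have l_uniq : List.NoDup l by apply/FinFun.Injective_map_NoDup/List.seq_NoDup.
have l_sub : List.incl l s by move=> _ /List.in_map_iff [n [<- _]].
have := List.NoDup_incl_length l_uniq l_sub.
rewrite List.length_map List.length_seq; lia.
Qed.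

Lemma finite_length_maximal (T : Type) (P : T -> Prop) (R : T -> T -> Prop) :
  finite_length P R -> (forall a, P a -> R a a) ->
  (forall a b, R a b -> R b a -> a = b) ->
  (forall a b c, R a b -> R b c -> R a c) ->
  forall (Q : T -> Prop) a0, (forall a, Q a -> P a) -> Q a0 ->
  exists m, Q m /\ forall z, Q z -> R m z -> z = m.
Proof.
move=> fl Rrefl Ranti Rtrans Q a0 QP Qa0; apply: NNPP => no_max.
have next m : Q m -> exists z, Q z /\ R m z /\ z <> m.
  move=> Qm; apply: NNPP => none; apply: no_max; exists m; split=> // z Qz Rmz.
  by apply: NNPP => zm; apply: none; exists z.
pose nx m := epsilon (inhabits a0) (fun z => Q z /\ R m z /\ z <> m).
have nxP m : Q m -> Q (nx m) /\ R m (nx m) /\ nx m <> m.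
  by move=> Qm; apply: epsilon_spec (next _ Qm).
pose f n := iter n nx a0.
have Qf n : Q (f n) by elim: n => //= n IH; case: (nxP _ IH).
have f_mono n k : (n <= k)%N -> R (f n) (f k).
  elim: k => [|k IH]; first by rewrite leqn0 => /eqP ->; apply/Rrefl/QP/Qf.
  rewrite leq_eqVlt ltnS => /predU1P [-> | /IH Rnk]; first by apply/Rrefl/QP/Qf.
  exact: Rtrans Rnk (nxP _ (Qf k)).2.1.
have f_neq n k : (n < k)%N -> f k <> f n.
  move=> nk E; have [_ [Rn ne]] := nxP _ (Qf n).
  by apply: ne; apply: Ranti _ Rn; have := f_mono _ _ nk; rewrite E.
have f_inj : injective f.
  by move=> n k E; case: (ltngtP n k) => // /f_neq; [move/(_ (esym E)) | move/(_ E)].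
have [s s_cover] : exists s, forall a, (exists n, f n = a) -> List.In a s.
  apply: fl => [_ [n <-] | _ _ [n <-] [k <-]]; first exact/QP.
  by case/orP: (leq_total n k) => /f_mono; [left | right].
by apply: (list_cover_not_injective (s := s)) f_inj => n; apply: s_cover; exists n.
Qed.

Lemma clos_trans_cover (T : Type) (R : T -> T -> Prop) u a :
  clos_trans T R u a ->
  (forall t, clos_trans T R u t -> clos_trans T R t a -> t = u \/ t = a) -> R u a.
Proof.
move=> ua; elim: (clos_trans_t1n _ _ _ _ ua) => {ua u a} [u a // | u t a ut ta IH between].
have ta' := clos_t1n_trans _ _ _ _ ta.
case: (between t (t_step _ _ _ _ ut) ta') => tu; last by rewrite -tu.
by subst t; apply: IH between.
Qed.

(* The consequences of [glued_system] used below.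
   Unlike [glued_system] itself they are invariant under reversing the order of
   [S] and of every component ([glued_core_dual]), which yields the meet half
   for free. *)
Record glued_core {d : Order.disp_t} {S : latticeType d} {T : Type}
    (Lm : S -> T -> Prop) (le : S -> T -> T -> Prop) : Prop := {
  glued_le_mem : forall x a b, le x a b -> Lm x a /\ Lm x b;
  glued_le_refl : forall x a, Lm x a -> le x a a;
  glued_le_trans : forall x a b c, le x a b -> le x b c -> le x a c;
  glued_lub : forall x a b, Lm x a -> Lm x b -> exists c, is_lub (Lm x) (le x) a b c;
  glued_glb : forall x a b, Lm x a -> Lm x b -> exists c, is_glb (Lm x) (le x) a b c;
  glued_bot : forall x, exists z, Lm x z /\ forall a, Lm x a -> le x z a;
  glued_top : forall x, exists t, Lm x t /\ forall a, Lm x a -> le x a t;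
  glued_up_closed : forall x y a b,
    x <= y -> Lm x a -> Lm y a -> le x a b -> Lm y b;
  glued_down_closed : forall x y a b,
    x <= y -> Lm x a -> Lm y a -> le y b a -> Lm x b;
  glued_le_agree : forall x y a b, x <= y -> Lm x a -> Lm y a -> Lm x b -> Lm y b ->
    (le x a b <-> le y a b);
  glued_mem_meet_join : forall x y a, Lm x a -> Lm y a -> Lm (x `&` y) a /\ Lm (x `|` y) a }.

Section GluedCore.
Variables (d : Order.disp_t) (S : latticeType d) (T : Type).
Variables (Lm : S -> T -> Prop) (le : S -> T -> T -> Prop).

Lemma glued_system_core : glued_system Lm le -> glued_core Lm le.
Proof.
case=> fl [inter [agree [_ mem]]]; split.
- by move=> x; case: (fl x).
- by move=> x; case: (fl x) => _ [].
- by move=> x; case: (fl x) => _ [_ [_ []]].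
- by move=> x; case: (fl x) => _ [_ [_ [_ []]]].
- by move=> x; case: (fl x) => _ [_ [_ [_ [_ []]]]].
- by move=> x; case: (fl x) => _ [_ [_ [_ [_ [_ []]]]]].
- by move=> x; case: (fl x) => _ [_ [_ [_ [_ [_ [_ []]]]]]].
- move=> x y a b xy xa ya xab; have [_ xb] := (fl x).1 a b xab.
  have [[_ [_ [up _]]] _] := inter x y xy (ex_intro _ a (conj xa ya)).
  exact: (up a b (conj xa ya) xb xab).2.
- move=> x y a b xy xa ya yba; have [yb _] := (fl y).1 b a yba.
  have [_ [_ [_ [down _]]]] := inter x y xy (ex_intro _ a (conj xa ya)).
  exact: (down a b (conj xa ya) yb yba).1.
- by move=> x y a b xy xa ya; apply: agree xy (ex_intro _ a (conj xa ya)) a b xa ya.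
- exact: mem.
Qed.

Lemma glued_core_dual :
  glued_core Lm le -> @glued_core _ S^d T Lm (fun x a b => le x b a).
Proof.
case=> lemem lerefl letrans lub glb bot top up down agree mem; split.
- by move=> x a b /lemem [].
- exact: lerefl.
- by move=> x a b c ab bc; apply: letrans bc ab.
- exact: glb.
- exact: lub.
- exact: top.
- exact: bot.
- by move=> x y a b yx xa ya; apply: down yx ya xa.
- by move=> x y a b yx xa ya; apply: up yx ya xa.
- by move=> x y a b yx xa ya xb yb; rewrite (agree y x b a).
- by move=> x y a xa ya; have [] := mem x y a xa ya.
Qed.

End GluedCore.

Section Components.
Variables (d : Order.disp_t) (S : latticeType d) (T : Type).
Variables (Lm : S -> T -> Prop) (le : S -> T -> T -> Prop).
Hypothesis K : glued_core Lm le.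

Lemma component_le_up y z a b :
  y <= z -> Lm z a -> le y a b -> Lm z b /\ le z a b.
Proof.
move=> yz za yab; have [ya yb] := glued_le_mem K yab.
have zb := glued_up_closed K yz ya za yab.
by split=> //; apply/(glued_le_agree K yz ya za yb zb).
Qed.

Lemma component_le_down y z a b :
  z <= y -> Lm z b -> le y a b -> Lm z a /\ le z a b.
Proof.
move=> zy zb yab; have [ya yb] := glued_le_mem K yab.
have za := glued_down_closed K zy zb yb yab.
by split=> //; apply/(glued_le_agree K zy za ya zb yb).
Qed.

Lemma bot_mem_down x y a z : x <= y -> Lm x a -> Lm y a ->
  (forall e, Lm y e -> le y z e) -> Lm x z.
Proof. by move=> xy xa ya zbot; exact (glued_down_closed K xy xa ya (zbot a ya)). Qed.

Lemma glued_le_step x a b : le x a b -> glued_le le a b.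
Proof. by move=> xab; apply: t_step; exists x. Qed.

Lemma glued_le_setr a b : glued_le le a b -> glued_set Lm b.
Proof. by elim=> // {}a {}b [x /(glued_le_mem K) [_ xb]]; exists x. Qed.

Definition bounded_step (m : S) (a b : T) : Prop := exists2 y, y <= m & le y a b.
Local Notation bounded_path m := (clos_refl_trans T (bounded_step m)).

Lemma bounded_path_mono w z a b :
  w <= z -> bounded_path w a b -> bounded_path z a b.
Proof.
move=> wz; elim=> [{}a {}b [y yw yab] | {}a | {}a b' {}b _ IH1 _ IH2].
- by apply: rt_step; exists y => //; apply: le_trans yw wz.
- exact: rt_refl.
- exact: rt_trans IH1 IH2.
Qed.

Lemma glued_le_bounded_path a c z : glued_le le a c -> Lm z c ->
  exists2 w, w <= z & Lm w a /\ bounded_path z a c.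
Proof.
move=> ac; elim: ac z => [{}a {}c [y yac] | {}a b {}c _ IH1 _ IH2] z zc.
- have [_ yc] := glued_le_mem K yac.
  have [yzc _] := glued_mem_meet_join K yc zc.
  have [yza yzac] := component_le_down (leIl y z) yzc yac.
  exists (y `&` z); first exact: leIr.
  by split=> //; apply: rt_step; exists (y `&` z); first exact: leIr.
- have [w1 w1z [w1b bc]] := IH2 z zc.
  have [w2 w2w1 [w2a ab]] := IH1 w1 w1b.
  exists w2; first exact: le_trans w2w1 w1z.
  by split=> //; apply: rt_trans (bounded_path_mono w1z ab) bc.
Qed.

Lemma bounded_path_component z a c :
  bounded_path z a c -> Lm z a -> Lm z c /\ le z a c.
Proof.
elim=> [{}a {}c [y yz yac] za | {}a za | {}a b {}c _ IH1 _ IH2 za].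
- exact: component_le_up yz za yac.
- by split=> //; exact (glued_le_refl K za).
- have [zb zab] := IH1 za; have [zc zbc] := IH2 zb.
  by split=> //; exact (glued_le_trans K zab zbc).
Qed.

Lemma glued_le_component x a c : Lm x a -> Lm x c ->
  (glued_le le a c <-> le x a c).
Proof.
move=> xa xc; split=> [ac | xac]; last exact: glued_le_step xac.
have [w _ [_ path]] := glued_le_bounded_path ac xc.
exact: (bounded_path_component path xa).2.
Qed.

Lemma component_convex x a b c : Lm x a -> Lm x c ->
  glued_le le a b -> glued_le le b c -> Lm x b.
Proof.
move=> xa xc ab bc; have [w wx [wb _]] := glued_le_bounded_path bc xc.
have [_ _ [_ path]] := glued_le_bounded_path ab wb.
exact: (bounded_path_component (bounded_path_mono wx path) xa).1.
Qed.

Lemma glued_le_mem_up x a c : glued_le le a c -> Lm x a ->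
  exists2 w, x <= w & Lm w c.
Proof.
move=> ac; elim: ac x => [{}a {}c [y yac] | {}a b {}c _ IH1 _ IH2] x xa.
- have [ya _] := glued_le_mem K yac.
  have [_ xya] := glued_mem_meet_join K xa ya.
  exists (x `|` y); first exact: leUl.
  exact: (component_le_up (leUr y x) xya yac).1.
- have [w1 xw1 w1b] := IH1 x xa; have [w2 w1w2 w2c] := IH2 w1 w1b.
  by exists w2 => //; apply: le_trans xw1 w1w2.
Qed.

Lemma component_lub_up x y a b c : x <= y -> Lm x a -> Lm y a -> Lm x b -> Lm y b ->
  is_lub (Lm x) (le x) a b c -> is_lub (Lm y) (le y) a b c.
Proof.
move=> xy xa ya xb yb [xc [ac [bc c_least]]].
have yc := glued_up_closed K xy xa ya ac.
have agree u w : Lm x u -> Lm y u -> Lm x w -> Lm y w -> le x u w <-> le y u w.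
  exact (glued_le_agree K xy).
have [k [yk [ak [bk k_least]]]] := glued_lub K ya yb.
have kc : le y k c by apply: k_least => //; apply/agree.
have xk := glued_down_closed K xy xc yc kc.
have ck : le y c k by apply/agree => //; apply: c_least => //; apply/agree.
split=> //; split; first exact/agree.
split; first exact/agree.
by move=> e ye ae be; exact (glued_le_trans K ck (k_least e ye ae be)).
Qed.

Lemma bounded_path_lub_bot m x y a e z0 c :
  bounded_path m a e -> Lm m e -> x <= y -> y <= m -> Lm x a ->
  Lm y z0 -> (forall f, Lm y f -> le y z0 f) ->
  is_lub (Lm x) (le x) a z0 c -> glued_le le c e.
Proof.
move=> ae; elim: (clos_rt_rt1n _ _ _ _ ae) x y z0 c => {ae a e}
  [a | a t e [q qm aqt] _ IH] x y z0 c me xy ym xa yz0 z0_bot [xc [ac [z0c c_least]]].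
- have [xz0 _] := glued_le_mem K z0c.
  have xm := le_trans xy ym.
  have yc := glued_up_closed K xy xz0 yz0 z0c.
  have mc := glued_up_closed K xm xa me ac.
  have [z2 [mz2 z2_bot]] := glued_bot K m.
  have yz2 := bot_mem_down ym yc mc z2_bot.
  have xz2 := bot_mem_down xm xa me z2_bot.
  have z0z2 : le x z0 z2 by apply/(glued_le_agree K xy xz0 yz0 xz2 yz2)/z0_bot.
  have z2a : le x z2 a by apply/(glued_le_agree K xm xz2 mz2 xa me)/z2_bot.
  apply: (glued_le_step (x := x)); apply: c_least => //.
  + exact (glued_le_refl K xa).
  + exact (glued_le_trans K z0z2 z2a).
- have [qa _] := glued_le_mem K aqt.
  have [xz0 _] := glued_le_mem K z0c.
  set x' := x `|` q; set y' := y `|` x'.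
  have xx' : x <= x' := leUl x q.
  have x'y' : x' <= y' := leUr x' y.
  have x'm : x' <= m by rewrite leUx (le_trans xy ym) qm.
  have y'm : y' <= m by rewrite leUx ym x'm.
  have [_ x'a] := glued_mem_meet_join K xa qa.
  have [x't x'at] := component_le_up (leUr q x) x'a aqt.
  have yc := glued_up_closed K xy xz0 yz0 z0c.
  have x'c := glued_up_closed K xx' xa x'a ac.
  have [_ y'c] := glued_mem_meet_join K yc x'c.
  have [z1 [y'z1 z1_bot]] := glued_bot K y'.
  have x'z1 := bot_mem_down x'y' x'c y'c z1_bot.
  have yz1 := bot_mem_down (leUl y x') yc y'c z1_bot.
  have z1c' : le x' z1 c by apply/(glued_le_agree K x'y' x'z1 y'z1 x'c y'c)/z1_bot.
  have xz1 := glued_down_closed K xx' xc x'c z1c'.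
  have z0z1 : le x z0 z1 by apply/(glued_le_agree K xy xz0 yz0 xz1 yz1)/z0_bot.
  (* [z0 <= z1 <= c]: the bottom of the larger component [y'] gives the same join *)
  have c_lub1 : is_lub (Lm x) (le x) a z1 c.
    split=> //; split=> //; split.
    + by apply/(glued_le_agree K xx' xz1 x'z1 xc x'c).
    + by move=> f xf af z1f; apply: c_least => //; exact (glued_le_trans K z0z1 z1f).
  have [c' c'_lub] := glued_lub K x't x'z1.
  have c'e := IH x' y' z1 c' me x'y' y'm x't y'z1 z1_bot c'_lub.
  have [x'c' [tc' [z1c'' _]]] := c'_lub.
  have [_ [_ [_ c_least']]] := component_lub_up xx' xa x'a xz1 x'z1 c_lub1.
  apply: t_trans c'e; apply: (glued_le_step (x := x')).
  exact: c_least' x'c' (glued_le_trans K x'at tc') z1c''.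
Qed.

Lemma bounded_path_lub m x a b c e :
  bounded_path m a e -> Lm m e -> x <= m -> Lm x a -> Lm x b ->
  glued_le le b e -> is_lub (Lm x) (le x) a b c -> glued_le le c e.
Proof.
move=> ae; elim: (clos_rt_rt1n _ _ _ _ ae) x b c => {ae a e}
  [a | a t e [q qm aqt] _ IH] x b c me xm xa xb be [xc [ac [bc c_least]]].
- apply: (glued_le_step (x := x)); apply: c_least => //.
  + exact (glued_le_refl K xa).
  + exact/(glued_le_component xb xa).
- have [qa _] := glued_le_mem K aqt.
  set x' := x `|` q.
  have xx' : x <= x' := leUl x q.
  have x'm : x' <= m by rewrite leUx xm qm.
  have [_ x'a] := glued_mem_meet_join K xa qa.
  have [x't x'at] := component_le_up (leUr q x) x'a aqt.
  have [z0 [x'z0 z0_bot]] := glued_bot K x'.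
  have xz0 := bot_mem_down xx' xa x'a z0_bot.
  (* move [b] up into [L_x'] by joining with its bottom *)
  have [bp bp_lub] := glued_lub K xb xz0.
  have [_ _ [_ b_path]] := glued_le_bounded_path be me.
  have bpe := bounded_path_lub_bot b_path me xx' x'm xb x'z0 z0_bot bp_lub.
  have [xbp [bbp [z0bp _]]] := bp_lub.
  have x'bp := glued_up_closed K xx' xz0 x'z0 z0bp.
  have [c' c'_lub] := glued_lub K x't x'bp.
  have c'e := IH x' bp c' me x'm x't x'bp bpe c'_lub.
  have [x'c' [tc' [bpc' _]]] := c'_lub.
  have [c2 c2_lub] := glued_lub K xa xbp.
  have [_ [_ [_ c2_least]]] := component_lub_up xx' xa x'a xbp x'bp c2_lub.
  have c2c' := c2_least c' x'c' (glued_le_trans K x'at tc') bpc'.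
  have [xc2 [ac2 [bpc2 _]]] := c2_lub.
  have cc2 : le x c c2 by apply: c_least => //; exact (glued_le_trans K bbp bpc2).
  apply: t_trans (glued_le_step cc2) _.
  exact: t_trans (glued_le_step c2c') c'e.
Qed.

Lemma glued_le_component_lub x a b c e : Lm x a -> Lm x b ->
  is_lub (Lm x) (le x) a b c -> glued_le le a e -> glued_le le b e ->
  glued_le le c e.
Proof.
move=> xa xb c_lub ae be.
have [w1 xw1 w1e] := glued_le_mem_up ae xa.
have [w2 xw2 w2e] := glued_le_mem_up be xb.
have [me _] := glued_mem_meet_join K w1e w2e.
have xm : x <= w1 `&` w2 by rewrite lexI xw1 xw2.
have [_ _ [_ a_path]] := glued_le_bounded_path ae me.
exact: bounded_path_lub a_path me xm xa xb be c_lub.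
Qed.

Lemma component_lubE x a b c : Lm x a -> Lm x b -> Lm x c ->
  is_lub (glued_set Lm) (glued_le le) a b c <-> is_lub (Lm x) (le x) a b c.
Proof.
move=> xa xb xc; split=> [[_ [ac [bc c_least]]] | c_lub].
- split=> //; split; first exact/(glued_le_component xa xc).
  split; first exact/(glued_le_component xb xc).
  move=> e xe ae be; apply/(glued_le_component xc xe)/c_least.
  + by exists x.
  + exact: glued_le_step ae.
  + exact: glued_le_step be.
- have [_ [ac [bc _]]] := c_lub.
  split; first by exists x.
  split; first exact: glued_le_step ac.
  split; first exact: glued_le_step bc.
  by move=> e _; apply: glued_le_component_lub xa xb c_lub.
Qed.

Lemma mem_greatest_index a y0 : lattice_finite_length S -> Lm y0 a ->
  exists x, Lm x a /\ forall y, Lm y a -> y <= x.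
Proof.
move=> fl y0a.
have anti (x y : S) : x <= y -> y <= x -> x = y by move=> xy yx; apply/le_anti/andP.
have trans (x y z : S) : x <= y -> y <= z -> x <= z by apply: le_trans.
have [x [xa x_max]] := finite_length_maximal fl (fun x _ => le_refl x) anti trans
  (Q := fun y => Lm y a) (fun _ _ => I) y0a.
exists x; split=> // y ya.
have [_ xya] := glued_mem_meet_join K xa ya.
by rewrite -(x_max _ xya (leUl x y)) leUr.
Qed.

Lemma sup_mem_component x (A : T -> Prop) v e0 :
  is_fl_lattice (Lm x) (le x) -> (forall a, A a -> Lm x a) ->
  Lm x e0 -> glued_le le e0 v -> is_sup (glued_set Lm) (glued_le le) A v -> Lm x v.
Proof.
case=> _ [lrefl [lanti [ltrans [_ [_ [_ [_ fl]]]]]]] Ax xe0 e0v [_ [Av v_least]].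
have [s [[xs sv] s_max]] := finite_length_maximal fl lrefl lanti ltrans
  (Q := fun e => Lm x e /\ glued_le le e v) (fun _ => @proj1 _ _) (conj xe0 e0v).
have s_greatest e : Lm x e -> glued_le le e v -> le x e s.
  move=> xe ev; have [c c_lub] := glued_lub K xe xs.
  have cv := glued_le_component_lub xe xs c_lub ev sv.
  have [xc [ec [sc _]]] := c_lub.
  by rewrite -(s_max c (conj xc cv) sc).
have vs : glued_le le v s.
  apply: v_least; first by exists x.
  by move=> a Aa; apply: (glued_le_step (x := x)); apply: s_greatest (Ax a Aa) (Av a Aa).
exact (component_convex xs xs sv vs).
Qed.

End Components.

Lemma glued_le_dual d (S : latticeType d) T (le : S -> T -> T -> Prop) :
  @glued_le _ S^d T (fun x a b => le x b a) = (fun a b => glued_le le b a).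
Proof.
apply: functional_extensionality => a; apply: functional_extensionality => b.
by apply: propositional_extensionality; symmetry; apply: clos_trans_transp_permute.
Qed.

Lemma component_glbE d (S : latticeType d) T (Lm : S -> T -> Prop) le
    (K : glued_core Lm le) x a b c : Lm x a -> Lm x b -> Lm x c ->
  is_glb (glued_set Lm) (glued_le le) a b c <-> is_glb (Lm x) (le x) a b c.
Proof.
move=> xa xb xc; have := component_lubE (glued_core_dual K) xa xb xc.
by rewrite glued_le_dual.
Qed.

Unset Implicit Arguments.

Theorem lemma3p1 (d : Order.disp_t) (S : latticeType d) (T : Type)
  (Lm : S -> T -> Prop) (le : S -> T -> T -> Prop)
  (HS : lattice_finite_length S)
  (Hsys : glued_system Lm le)
  (U : T -> Prop) (u v : T)
  (HUL : forall a, U a -> glued_set Lm a)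
  (Hu : U u /\ forall a, U a -> glued_le le u a)
  (Hv : U v /\ forall a, U a -> glued_le le a v) :
  let ltL := fun a b => glued_le le a b /\ a <> b in
  let A := fun a => U a /\ a <> u /\ ~ (exists b, U b /\ ltL u b /\ ltL b a) in
  (forall a, A a -> ltL u a /\
     ~ (exists c, glued_set Lm c /\ ltL u c /\ ltL c a)) ->
  is_sup (glued_set Lm) (glued_le le) A v ->
  exists x : S, (forall a, U a -> Lm x a) /\
    forall a b c, U a -> U b -> U c ->
      (is_lub (glued_set Lm) (glued_le le) a b c <-> is_lub (Lm x) (le x) a b c) /\
      (is_glb (glued_set Lm) (glued_le le) a b c <-> is_glb (Lm x) (le x) a b c).
Proof.
move=> ltL A A_covers v_sup; have K := glued_system_core Hsys.
case: Hu => Uu u_least; case: Hv => Uv v_greatest.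
have [y0 y0u] := HUL u Uu.
have [x [xu x_greatest]] := mem_greatest_index K HS y0u.
have xA a : A a -> Lm x a.
  move=> Aa; have [[ua _] no_between] := A_covers a Aa.
  have [y yua] : exists y, le y u a.
    apply: (@clos_trans_cover T (fun p q => exists y, le y p q) u a ua) => t ut ta.
    case: (classic (u = t)) => [<- | ut']; first by left.
    case: (classic (t = a)) => [| ta']; first by right.
    by case: no_between; exists t; split; [exact (glued_le_setr K ut) | split; split].
  have [yu _] := glued_le_mem K yua.
  exact: (component_le_up K (x_greatest y yu) xu yua).1.
have xv := sup_mem_component K (Hsys.1 x) xA xu (u_least v Uv) v_sup.
have xU a : U a -> Lm x a.
  by move=> Ua; exact (component_convex K xu xv (u_least a Ua) (v_greatest a Ua)).
exists x; split=> // a b c /xU xa /xU xb /xU xc.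
by split; [exact (component_lubE K xa xb xc) | exact (component_glbE K xa xb xc)].
Qed.
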